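(* In the Setting below and under the Standing Assumption, for each fixed $p\in\mathbb{Z}$ there exists a constant $C\ge 0$ depending on $f$ such that $m_{min}(x,N,p)\le C\cdot N+o(N)$ as $N\to\infty$, for all $x\in\mathbb{Q}\cap D$. Consequently $\sigma(x,p)\le C$ for all $x\in\mathbb{Q}\cap D$, and the same bound holds for $\sigma(x)$ whenever it exists.
   Context: Setting. $D\subseteq\mathbb{R}$ is a compact interval and $f:D\to D$ is twice continuously differentiable on $D$ with $f''$ bounded. For $x\in D$ the orbit is $x_0=x$, $x_{n+1}=f(x_n)$. A floating-point number of precision $m$ is a real $s\cdot 2^{e-m}$ with $s,e\in\mathbb{Z}$, $|s|\le 2^m-1$; $rd_m(y)$ denotes rounding of $y$ to a nearest floating-point number of precision $m$. Let $L(a,e):=\sup\{|f'(y)|: y\in[a-e,a+e]\cap D\}$ and fix a function $\bar L$ with $L(a,e)\le\bar L(a,e)\le\min(\bar L_{max},\,L(a,e)+Ke)$ for constants $\bar L_{max},K\ge0$. For $x\in\mathbb{Q}\cap D$ and precision $m\ge1$ the computed sequence is $\hat x_0=rd_m(x)$, $\bar e_0=2^{-m}|\hat x_0|$, $\hat x_{n+1}=rd_m(f(\hat x_n))$, $\bar e_{n+1}=\bar L(\hat x_n,\bar e_n)\bar e_n+2^{-m}|\hat x_{n+1}|$ (all $\hat x_n$ assumed in $D$). For $N\in\mathbb{N}$, $p\in\mathbb{Z}$, $m_{min}(x,N,p)$ is the least $m\ge1$ such that the sequence computed at precision $m$ satisfies $\bar e_n\le\frac{10^{-p}}{1+10^{-p}}|\hat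 x_n|$ for all $n=0,\dots,N$. The loss of significance rate: $\sigma(x,p):=\limsup_{N\to\infty} m_{min}(x,N,p)/N$ and $\sigma(x):=\lim_{p\to\infty}\sigma(x,p)$. Standing Assumption: for the orbit of $x$, $x_n\ne0$ for all $n$ and $\lim_{N\to\infty}\mathrm{ld}(\min\{|x_n|:0\le n\le N\})/N=0$, where $\mathrm{ld}=\log_2$. *)

From Stdlib Require Import Reals Lra Lia ZArith QArith Qreals.
Open Scope R_scope.

Definition inD (a b y : R) : Prop := a <= y <= b.

(* One-sided-at-the-endpoints derivative: g has derivative g' at every point
   of D, where difference quotients are taken with x+h in D. *)
Definition deriv_within (D : R -> Prop) (g g' : R -> R) : Prop :=
  forall x, D x -> forall eps, 0 < eps -> exists delta, 0 < delta /\
    forall h, h <> 0 -> Rabs h < delta -> D (x + h) ->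
      Rabs ((g (x + h) - g x) / h - g' x) < eps.

Definition cont_within (D : R -> Prop) (g : R -> R) : Prop :=
  forall x, D x -> forall eps, 0 < eps -> exists delta, 0 < delta /\
    forall y, D y -> Rabs (y - x) < delta -> Rabs (g y - g x) < eps.

Definition is_float (m : nat) (r : R) : Prop :=
  exists s e : Z, (Z.abs s <= 2 ^ Z.of_nat m - 1)%Z /\
    r = IZR s * powerRZ 2 (e - Z.of_nat m).

(* rd m y is a nearest floating-point number of precision m to y
   (any tie-breaking rule is allowed). *)
Definition is_rounding (rd : nat -> R -> R) : Prop :=
  forall (m : nat) (y : R), (1 <= m)%nat ->
    is_float m (rd m y) /\
    forall g, is_float m g -> Rabs (rd m y - y) <= Rabs (g - y).

(* The set {|f'(y)| : y in [c-e,c+e] ∩ D}; L(c,e) is its supremum. *)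
Definition Lset (a b : R) (f1 : R -> R) (c e : R) : R -> Prop :=
  fun z => exists y, inD a b y /\ c - e <= y <= c + e /\ z = Rabs (f1 y).

Definition Lbar_spec (a b : R) (f1 : R -> R) (Lbar : R -> R -> R)
  (Lmax K : R) : Prop :=
  forall c e l, inD a b c -> 0 <= e -> is_lub (Lset a b f1 c e) l ->
    l <= Lbar c e /\ Lbar c e <= Rmin Lmax (l + K * e).

Fixpoint orbit (f : R -> R) (x : R) (n : nat) : R :=
  match n with
  | O => x
  | S k => f (orbit f x k)
  end.

Fixpoint minabs (f : R -> R) (x : R) (N : nat) : R :=
  match N with
  | O => Rabs x
  | S k => Rmin (minabs f x k) (Rabs (orbit f x (S k)))
  end.

Definition ld (y : R) : R := ln y / ln 2.

Definition standing_assumption (f : R -> R) (x : R) : Prop :=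
  (forall n, orbit f x n <> 0) /\
  Un_cv (fun N => ld (minabs f x N) / INR N) 0.

Definition is_rational (x : R) : Prop := exists q : Q, Q2R q = x.

Fixpoint xhat (f : R -> R) (rd : nat -> R -> R) (m : nat) (x : R) (n : nat) : R :=
  match n with
  | O => rd m x
  | S k => rd m (f (xhat f rd m x k))
  end.

Fixpoint ebar (f : R -> R) (rd : nat -> R -> R) (Lbar : R -> R -> R)
  (m : nat) (x : R) (n : nat) : R :=
  match n with
  | O => / 2 ^ m * Rabs (rd m x)
  | S k => Lbar (xhat f rd m x k) (ebar f rd Lbar m x k) * ebar f rd Lbar m x k
           + / 2 ^ m * Rabs (xhat f rd m x (S k))
  end.

Definition accurate (f : R -> R) (rd : nat -> R -> R) (Lbar : R -> R -> R)
  (m : nat) (x : R) (N : nat) (p : Z) : Prop :=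
  forall n, (n <= N)%nat ->
    ebar f rd Lbar m x n
      <= powerRZ 10 (- p) / (1 + powerRZ 10 (- p)) * Rabs (xhat f rd m x n).

Definition is_mmin (f : R -> R) (rd : nat -> R -> R) (Lbar : R -> R -> R)
  (x : R) (N : nat) (p : Z) (m : nat) : Prop :=
  (1 <= m)%nat /\ accurate f rd Lbar m x N p /\
  forall m', (1 <= m')%nat -> (m' < m)%nat -> ~ accurate f rd Lbar m' x N p.

Definition is_limsup (u : nat -> R) (l : R) : Prop :=
  (forall eps, 0 < eps -> exists N0, forall N, (N0 <= N)%nat -> u N <= l + eps) /\
  (forall eps, 0 < eps -> forall N0, exists N, (N0 <= N)%nat /\ l - eps <= u N).

Definition is_sigma_p (f : R -> R) (rd : nat -> R -> R) (Lbar : R -> R -> R)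
  (x : R) (p : Z) (s : R) : Prop :=
  exists mm : nat -> nat, (forall N, is_mmin f rd Lbar x N p (mm N)) /\
    is_limsup (fun N => INR (mm N) / INR N) s.

Definition is_sigma (f : R -> R) (rd : nat -> R -> R) (Lbar : R -> R -> R)
  (x : R) (s : R) : Prop :=
  exists sig : Z -> R, (forall p, is_sigma_p f rd Lbar x p (sig p)) /\
    forall eps, 0 < eps -> exists P : Z, forall p, (P <= p)%Z -> Rabs (sig p - s) < eps.

From Stdlib Require Import Reals ZArith Lra Lia Classical.
Open Scope R_scope.

(* The mean value inequality bounds [f'] on [D] and makes [f] Lipschitz with a
   constant [Lam >= 1] that also dominates [Lbar].  Each step of the computation adds a
   rounding error of at most [2^(n0 - m)] (where [D] lies in [[-2^(n0-1), 2^(n0-1)]])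
   and multiplies the previous error by at most [Lam]; so both [|xhat_n - x_n|] and
   [ebar_n] are at most [2^(n0 - m) (2 Lam)^n].  With [2^c >= 2 Lam], precision
   [m = c N + k N] with [2^(k N)] of order [2^n0 / min_{n <= N} |x_n|] keeps all of them
   below the required fraction of [|xhat_n|] up to step [N], and the standing assumption
   says exactly that [k N = o(N)].  Hence [C = c]. *)

Lemma deriv_within_local_lipschitz (a b : R) (g g' : R -> R) (L : R) :
  deriv_within (inD a b) g g' -> (forall t, inD a b t -> Rabs (g' t) <= L) ->
  forall t, inD a b t -> forall eps, 0 < eps ->
  exists delta, 0 < delta /\ forall u, inD a b u -> Rabs (u - t) < delta ->
    Rabs (g u - g t) <= (L + eps) * Rabs (u - t).
Proof.
  intros Hd HL t Ht eps Heps.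
  destruct (Hd t Ht eps Heps) as [delta [Hdelta Hquot]].
  exists delta; split; [exact Hdelta|]; intros u Hu Hut.
  destruct (Req_dec u t) as [->|Hne].
  { rewrite !Rminus_diag, Rabs_R0; lra. }
  assert (Hh : u - t <> 0) by lra.
  specialize (Hquot (u - t) Hh Hut).
  replace (t + (u - t)) with u in Hquot by ring.
  specialize (Hquot Hu).
  replace (g u - g t) with ((g u - g t) / (u - t) * (u - t)) by (field; exact Hh).
  rewrite Rabs_mult; apply Rmult_le_compat_r; [apply Rabs_pos|].
  pose proof (Rabs_triang_inv ((g u - g t) / (u - t)) (g' t)); pose proof (HL t Ht); lra.
Qed.

(* Continuous induction: the supremum [s] of the points of [[x, y]] up to which the
   bound holds satisfies it too (approach from the left), and cannot be [< y]
   (push slightly to the right), both by the local bound at [s]. *)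
Lemma deriv_within_lipschitz_eps (a b : R) (g g' : R -> R) (L : R) :
  deriv_within (inD a b) g g' -> (forall t, inD a b t -> Rabs (g' t) <= L) ->
  forall x y, inD a b x -> inD a b y -> x <= y -> forall eps, 0 < eps ->
  Rabs (g y - g x) <= (L + eps) * (y - x).
Proof.
  intros Hd HL x y Hx Hy Hxy eps Heps.
  set (E := fun t => x <= t <= y /\ Rabs (g t - g x) <= (L + eps) * (t - x)).
  assert (Ex : E x) by (split; [lra|]; rewrite !Rminus_diag, Rabs_R0; lra).
  destruct (completeness E) as [s [Hub Hlub]].
  { exists y; intros t [Ht _]; lra. }
  { exists x; exact Ex. }
  assert (Hxs : x <= s) by (apply Hub, Ex).
  assert (Hsy : s <= y) by (apply Hlub; intros t [Ht _]; lra).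
  assert (Hs : inD a b s) by (unfold inD in *; lra).
  assert (HL0 : 0 <= L + eps) by (pose proof (HL x Hx); pose proof (Rabs_pos (g' x)); lra).
  destruct (deriv_within_local_lipschitz a b g g' L Hd HL s Hs eps Heps) as [d [Hd0 Hnear]].
  assert (Es : E s).
  { destruct (classic (exists t, E t /\ s - d < t)) as [[t [[Ht Ebound] Hst]]|Hnone].
    - assert (Hts : t <= s) by (apply Hub; split; assumption).
      assert (Ht' : inD a b t) by (unfold inD in *; lra).
      pose proof (Hnear t Ht' ltac:(rewrite Rabs_left1; lra)) as Hts'.
      rewrite (Rabs_left1 (t - s)) in Hts' by lra.
      split; [lra|].
      replace (g s - g x) with ((g t - g x) - (g t - g s)) by ring.
      replace ((L + eps) * (s - x)) with ((L + eps) * (t - x) + (L + eps) * - (t - s)) by ring.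
      eapply Rle_trans; [apply Rabs_triang|]; rewrite Rabs_Ropp; lra.
    - assert (s <= s - d); [|lra].
      apply Hlub; intros t Et; apply Rnot_lt_le; intro Hlt; apply Hnone; eauto. }
  destruct (Rle_lt_or_eq_dec s y Hsy) as [Hlt|<-]; [|apply Es].
  set (t := Rmin (s + d / 2) y).
  assert (Hst : s < t <= s + d / 2) by (unfold t; split; [apply Rmin_glb_lt|apply Rmin_l]; lra).
  assert (Hty : t <= y) by apply Rmin_r.
  assert (Ht : inD a b t) by (unfold inD in *; lra).
  pose proof (Hnear t Ht ltac:(rewrite Rabs_right; lra)) as Hts.
  rewrite (Rabs_right (t - s)) in Hts by lra.
  assert (Et : E t).
  { split; [lra|]; destruct Es as [_ Es].
    replace (g t - g x) with ((g t - g s) + (g s - g x)) by ring.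
    replace ((L + eps) * (t - x)) with ((L + eps) * (t - s) + (L + eps) * (s - x)) by ring.
    eapply Rle_trans; [apply Rabs_triang|]; lra. }
  pose proof (Hub t Et); lra.
Qed.

Lemma deriv_within_lipschitz (a b : R) (g g' : R -> R) (L : R) :
  deriv_within (inD a b) g g' -> (forall t, inD a b t -> Rabs (g' t) <= L) ->
  forall x y, inD a b x -> inD a b y -> Rabs (g y - g x) <= L * Rabs (y - x).
Proof.
  intros Hd HL.
  enough (Hle : forall x y, inD a b x -> inD a b y -> x <= y ->
                  Rabs (g y - g x) <= L * Rabs (y - x)).
  { intros x y Hx Hy; destruct (Rle_dec x y) as [Hxy|Hxy]; [auto|].
    rewrite <- Rabs_Ropp, <- (Rabs_Ropp (y - x)), !Ropp_minus_distr.
    apply Hle; auto; lra. }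
  intros x y Hx Hy Hxy; rewrite (Rabs_right (y - x)) by lra.
  apply Rle_plus_epsilon; intros eps Heps.
  pose proof (deriv_within_lipschitz_eps a b g g' L Hd HL x y Hx Hy Hxy
                (eps / (y - x + 1)) ltac:(apply Rdiv_lt_0_compat; lra)) as Hb.
  assert (eps / (y - x + 1) * (y - x) <= eps); [|nra].
  apply Rmult_le_reg_r with (y - x + 1); [lra|].
  replace (eps / (y - x + 1) * (y - x) * (y - x + 1)) with (eps * (y - x)) by (field; lra).
  nra.
Qed.

Lemma deriv_within_bounded (a b : R) (g g' : R -> R) (M : R) :
  a <= b -> deriv_within (inD a b) g g' -> (forall t, inD a b t -> Rabs (g' t) <= M) ->
  forall y, inD a b y -> Rabs (g y) <= Rabs (g a) + M * (b - a).
Proof.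
  intros Hab Hd HM y Hy.
  assert (Ha : inD a b a) by (unfold inD; lra).
  pose proof (deriv_within_lipschitz a b g g' M Hd HM a y Ha Hy) as Hlip.
  assert (HM0 : 0 <= M) by (pose proof (HM a Ha); pose proof (Rabs_pos (g' a)); lra).
  rewrite (Rabs_right (y - a)) in Hlip by (unfold inD in Hy; lra).
  pose proof (Rabs_triang_inv (g y) (g a)).
  unfold inD in Hy; nra.
Qed.

Lemma Lbar_spec_bounded (a b : R) (f1 : R -> R) (Lbar : R -> R -> R) (Lmax K L1 : R) :
  Lbar_spec a b f1 Lbar Lmax K -> (forall y, inD a b y -> Rabs (f1 y) <= L1) ->
  forall c e, inD a b c -> 0 <= e -> 0 <= Lbar c e <= Lmax.
Proof.
  intros Hspec Hf1 c e Hc He.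
  assert (Hcset : Lset a b f1 c e (Rabs (f1 c)))
    by (exists c; split; [exact Hc|]; repeat split; lra).
  destruct (completeness (Lset a b f1 c e)) as [l Hl].
  { exists L1; intros z [y [Hy [_ ->]]]; auto. }
  { eexists; exact Hcset. }
  pose proof (proj1 Hl _ Hcset); pose proof (Rabs_pos (f1 c)).
  destruct (Hspec c e l Hc He Hl); pose proof (Rmin_l Lmax (l + K * e)); lra.
Qed.

Lemma uniform_lipschitz_constant (a b : R) (f f1 f2 : R -> R) (Lbar : R -> R -> R)
    (Lmax K : R) :
  a <= b -> deriv_within (inD a b) f f1 -> deriv_within (inD a b) f1 f2 ->
  (exists M, forall y, inD a b y -> Rabs (f2 y) <= M) ->
  0 <= Lmax -> Lbar_spec a b f1 Lbar Lmax K ->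
  exists Lam, 1 <= Lam /\
    (forall u v, inD a b u -> inD a b v -> Rabs (f u - f v) <= Lam * Rabs (u - v)) /\
    (forall c e, inD a b c -> 0 <= e -> 0 <= Lbar c e <= Lam).
Proof.
  intros Hab Hd1 Hd2 [M HM] HLmax Hspec.
  set (L1 := Rabs (f1 a) + M * (b - a)).
  assert (HL1 : forall y, inD a b y -> Rabs (f1 y) <= L1)
    by exact (deriv_within_bounded a b f1 f2 M Hab Hd2 HM).
  assert (HL10 : 0 <= L1)
    by (pose proof (HL1 a ltac:(unfold inD; lra)); pose proof (Rabs_pos (f1 a)); lra).
  exists (1 + Lmax + L1); split; [lra|split].
  - intros u v Hu Hv; apply (deriv_within_lipschitz a b f f1); auto.
    intros t Ht; pose proof (HL1 t Ht); lra.
  - intros x e Hx He; pose proof (Lbar_spec_bounded a b f1 Lbar Lmax K L1 Hspec HL1 x e Hx He); lra.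
Qed.

Lemma pow2_pos (n : nat) : 0 < 2 ^ n.
Proof. apply pow_lt; lra. Qed.

Lemma pow2_unbounded (r : R) : exists n, r < 2 ^ n.
Proof.
  destruct (INR_unbounded r) as [n Hn]; exists n.
  enough (INR n + 1 <= 2 ^ n) by lra.
  clear Hn; induction n as [|n IH]; [simpl; lra|].
  rewrite S_INR; simpl; pose proof (pos_INR n); lra.
Qed.

Lemma interval_pow2_bound (a b : R) : exists n0, forall y, inD a b y -> 2 * Rabs y < 2 ^ n0.
Proof.
  destruct (pow2_unbounded (2 * (Rabs a + Rabs b))) as [n0 Hn0]; exists n0.
  intros y [Hay Hyb]; enough (Rabs y <= Rabs a + Rabs b) by lra.
  pose proof (Rle_abs b); pose proof (Rabs_pos a); pose proof (Rabs_pos b).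
  pose proof (Rle_abs (- a)); rewrite Rabs_Ropp in *.
  apply Rabs_le; lra.
Qed.

(* Round [y 2^m / 2^n0] down to the integer [up w - 1]: the resulting multiple of
   [2^(n0 - m)] is a float of precision [m] within [2^(n0 - m)] of [y]. *)
Lemma rounding_error_le (rd : nat -> R -> R) (n0 m : nat) (y : R) :
  is_rounding rd -> (1 <= m)%nat -> 2 * Rabs y < 2 ^ n0 ->
  Rabs (rd m y - y) <= 2 ^ n0 / 2 ^ m.
Proof.
  intros Hrd Hm Hy.
  pose proof (pow2_pos n0) as P0; pose proof (pow2_pos m) as Pm.
  assert (Hm2 : 2 <= 2 ^ m).
  { destruct m as [|m]; [lia|]; simpl; pose proof (pow2_pos m).
    enough (1 <= 2 ^ m) by lra; apply pow_R1_Rle; lra. }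
  set (w := y * 2 ^ m / 2 ^ n0).
  assert (Hw : Rabs w < 2 ^ m / 2).
  { unfold w, Rdiv.
    rewrite !Rabs_mult, (Rabs_right (2 ^ m)), Rabs_inv, (Rabs_right (2 ^ n0)) by lra.
    apply Rmult_lt_reg_r with (2 * 2 ^ n0); [lra|].
    replace (Rabs y * 2 ^ m * / 2 ^ n0 * (2 * 2 ^ n0)) with (2 * Rabs y * 2 ^ m) by (field; lra).
    replace (2 ^ m * / 2 * (2 * 2 ^ n0)) with (2 ^ n0 * 2 ^ m) by (field; lra).
    nra. }
  set (s := (up w - 1)%Z).
  destruct (archimed w) as [Hup1 Hup2].
  assert (Hs : IZR s = IZR (up w) - 1) by (unfold s; rewrite minus_IZR; reflexivity).
  assert (Hscale : powerRZ 2 (Z.of_nat n0 - Z.of_nat m) = 2 ^ n0 / 2 ^ m).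
  { unfold Z.sub; rewrite powerRZ_add, powerRZ_neg', <- !pow_powerRZ by lra; reflexivity. }
  assert (Hfloat : is_float m (IZR s * (2 ^ n0 / 2 ^ m))).
  { exists s, (Z.of_nat n0); split; [|rewrite Hscale; reflexivity].
    assert (Hpow : IZR (2 ^ Z.of_nat m) = 2 ^ m) by (rewrite <- pow_IZR; reflexivity).
    apply Rabs_def2 in Hw as [Hw1 Hw2].
    assert (IZR s < IZR (2 ^ Z.of_nat m)) as Hlt%lt_IZR by lra.
    assert (IZR (- 2 ^ Z.of_nat m) < IZR s) as Hgt%lt_IZR by (rewrite opp_IZR; lra).
    lia. }
  eapply Rle_trans; [exact (proj2 (Hrd m y Hm) _ Hfloat)|].
  replace (IZR s * (2 ^ n0 / 2 ^ m) - y) with ((IZR s - w) * (2 ^ n0 / 2 ^ m))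
    by (unfold w; field; lra).
  rewrite Rabs_mult, (Rabs_right (2 ^ n0 / 2 ^ m))
    by (apply Rle_ge, Rlt_le, Rdiv_lt_0_compat; lra).
  rewrite <- (Rmult_1_l (2 ^ n0 / 2 ^ m)) at 2.
  apply Rmult_le_compat_r; [apply Rlt_le, Rdiv_lt_0_compat; lra|].
  apply Rabs_le; lra.
Qed.

Definition ld_ceil (z : R) : nat := (Z.to_nat (up (ld z)) + 1)%nat.

Lemma le_pow2_ld_ceil (z : R) : 0 < z -> z <= 2 ^ ld_ceil z.
Proof.
  intros Hz.
  assert (Hln2 : 0 < ln 2) by (rewrite <- ln_1; apply ln_increasing; lra).
  assert (Hup : ld z < INR (ld_ceil z)).
  { destruct (archimed (ld z)) as [Hup _]; unfold ld_ceil; rewrite plus_INR; simpl (INR 1).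
    destruct (Z_le_gt_dec 0 (up (ld z))).
    - rewrite INR_IZR_INZ, Z2Nat.id by assumption; lra.
    - assert (IZR (up (ld z)) < 0) by (apply IZR_lt; lia).
      pose proof (pos_INR (Z.to_nat (up (ld z)))); lra. }
  rewrite <- Rpower_pow, <- (exp_ln z) at 1 by lra; unfold Rpower.
  apply Rlt_le, exp_increasing.
  replace (ln z) with (ld z * ln 2) by (unfold ld; field; lra).
  apply Rmult_lt_compat_r; assumption.
Qed.

Lemma ld_ceil_le (z : R) : INR (ld_ceil z) <= Rabs (ld z) + 2.
Proof.
  destruct (archimed (ld z)) as [_ Hup]; unfold ld_ceil; rewrite plus_INR; simpl (INR 1).
  pose proof (Rle_abs (ld z)); pose proof (Rabs_pos (ld z)).
  destruct (Z_le_gt_dec 0 (up (ld z))).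
  - rewrite INR_IZR_INZ, Z2Nat.id by assumption; lra.
  - replace (Z.to_nat (up (ld z))) with 0%nat by lia; simpl; lra.
Qed.

Lemma ld_div (u v : R) : 0 < u -> 0 < v -> ld (u / v) = ld u - ld v.
Proof.
  intros Hu Hv; unfold ld, Rdiv.
  rewrite ln_mult, ln_Rinv; [ring|exact Hv|exact Hu|now apply Rinv_0_lt_compat].
Qed.

Lemma cv_div_INR_dominated (A : R) (u v : nat -> R) :
  Un_cv (fun N => v N / INR N) 0 -> (forall N, 0 <= u N <= A + Rabs (v N)) ->
  Un_cv (fun N => u N / INR N) 0.
Proof.
  intros Hv Hu e He.
  destruct (Hv (e / 2)) as [N0 HN0]; [lra|].
  destruct (INR_unbounded (2 * Rabs A / e)) as [N1 HN1].
  exists (Nat.max (Nat.max N0 N1) 1); intros N HN.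
  assert (HNpos : 0 < INR N) by (apply lt_0_INR; lia).
  assert (HvN : Rabs (v N) < e / 2 * INR N).
  { specialize (HN0 N ltac:(lia)); unfold Rdist, Rdiv in HN0.
    rewrite Rminus_0_r, Rabs_mult, Rabs_inv, (Rabs_right (INR N)) in HN0 by lra.
    apply Rmult_lt_reg_r with (/ INR N); [apply Rinv_0_lt_compat; lra|].
    rewrite Rmult_assoc, Rinv_r, Rmult_1_r by lra; exact HN0. }
  assert (HA : Rabs A < e / 2 * INR N).
  { assert (HAN : 2 * Rabs A / e < INR N)
      by (apply Rlt_le_trans with (INR N1); [exact HN1|apply le_INR; lia]).
    apply Rmult_lt_compat_r with (r := e / 2) in HAN; [|lra].
    replace (2 * Rabs A / e * (e / 2)) with (Rabs A) in HAN by (field; lra); lra. }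
  specialize (Hu N); pose proof (Rle_abs A).
  unfold Rdist; rewrite Rminus_0_r, Rabs_right.
  - apply Rmult_lt_reg_r with (INR N); [exact HNpos|].
    replace (u N / INR N * INR N) with (u N) by (field; lra); lra.
  - unfold Rdiv; apply Rle_ge, Rmult_le_pos; [lra|apply Rlt_le, Rinv_0_lt_compat, HNpos].
Qed.

Lemma limsup_le_of_sublinear (u g : nat -> R) (c l : R) :
  Un_cv (fun N => g N / INR N) 0 -> (forall N, u N <= c * INR N + g N) ->
  is_limsup (fun N => u N / INR N) l -> l <= c.
Proof.
  intros Hg Hu [_ Hl]; apply Rle_plus_epsilon; intros e He.
  destruct (Hg (e / 2)) as [N0 HN0]; [lra|].
  destruct (Hl (e / 2) ltac:(lra) (Nat.max N0 1)) as [N [HN Hle]].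
  assert (HNpos : 0 < INR N) by (apply lt_0_INR; lia).
  specialize (HN0 N ltac:(lia)); unfold Rdist in HN0; rewrite Rminus_0_r in HN0.
  pose proof (Rle_abs (g N / INR N)).
  assert (u N / INR N <= c + g N / INR N); [|lra].
  apply Rmult_le_reg_r with (INR N); [exact HNpos|].
  replace ((c + g N / INR N) * INR N) with (c * INR N + g N) by (field; lra).
  replace (u N / INR N * INR N) with (u N) by (field; lra); apply Hu.
Qed.

Lemma le_of_cv_Z (sig : Z -> R) (s C : R) :
  (forall p, sig p <= C) ->
  (forall eps, 0 < eps -> exists P, forall p, (P <= p)%Z -> Rabs (sig p - s) < eps) ->
  s <= C.
Proof.
  intros Hle Hcv; apply Rle_plus_epsilon; intros e He.
  destruct (Hcv e He) as [P HP]; specialize (HP P (Z.le_refl P)).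
  rewrite Rabs_minus_sym in HP; pose proof (Rle_abs (s - sig P)); pose proof (Hle P); lra.
Qed.

Lemma minabs_le (f : R -> R) (x : R) (N n : nat) :
  (n <= N)%nat -> minabs f x N <= Rabs (orbit f x n).
Proof.
  induction N as [|N IH]; intros Hn.
  - replace n with 0%nat by lia; simpl; lra.
  - simpl minabs; destruct (Nat.eq_dec n (S N)) as [->|Hne]; [apply Rmin_r|].
    eapply Rle_trans; [apply Rmin_l|apply IH; lia].
Qed.

Lemma minabs_pos (f : R -> R) (x : R) :
  (forall n, orbit f x n <> 0) -> forall N, 0 < minabs f x N.
Proof.
  intros Hnz N; induction N as [|N IH]; simpl.
  - apply Rabs_pos_lt, (Hnz 0%nat).
  - apply Rmin_glb_lt; [exact IH|apply Rabs_pos_lt, (Hnz (S N))].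
Qed.

(* The factor [2] absorbs the fresh error [Q] of each step:
   [Q + Lam Q (2 Lam)^n <= Q (2 Lam)^(n+1)]. *)
Lemma affine_recursion_bound (Q Lam : R) (e : nat -> R) :
  0 <= Q -> 1 <= Lam -> (forall n, 0 <= e n) -> e 0%nat <= Q ->
  (forall n, e (S n) <= Q + Lam * e n) -> forall n, e n <= Q * (2 * Lam) ^ n.
Proof.
  intros HQ HLam He He0 Hstep n; induction n as [|n IH]; [simpl; lra|].
  assert (Hpow : 1 <= (2 * Lam) ^ n) by (apply pow_R1_Rle; lra).
  eapply Rle_trans; [apply Hstep|]; simpl.
  assert (Lam * e n <= Lam * (Q * (2 * Lam) ^ n)) by (apply Rmult_le_compat_l; lra).
  assert (Q <= Q * (Lam * (2 * Lam) ^ n)).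
  { rewrite <- (Rmult_1_r Q) at 1; apply Rmult_le_compat_l; [lra|].
    rewrite <- (Rmult_1_r 1); apply Rmult_le_compat; lra. }
  nra.
Qed.

Lemma pow_le_pow2_mul (r : R) (c n N : nat) :
  0 <= r -> r <= 2 ^ c -> (n <= N)%nat -> r ^ n <= 2 ^ (c * N).
Proof.
  intros Hr Hrc HnN; eapply Rle_trans; [apply pow_incr; split; eassumption|].
  rewrite <- pow_mult; apply Rle_pow; [lra|]; apply Nat.mul_le_mono_l, HnN.
Qed.

Lemma scaled_error_le (A B C r t : R) :
  0 < A -> 0 < B -> 0 < t -> 0 <= r <= B -> 2 * A / t <= C -> A / (B * C) * r <= t / 2.
Proof.
  intros HA HB Ht Hr HC.
  assert (HC0 : 0 < C) by (assert (0 < 2 * A / t) by (apply Rdiv_lt_0_compat; lra); lra).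
  assert (HAC : A / C <= t / 2).
  { apply Rmult_le_reg_r with (C * 2 / t); [apply Rdiv_lt_0_compat; lra|].
    replace (A / C * (C * 2 / t)) with (2 * A / t) by (field; lra).
    replace (t / 2 * (C * 2 / t)) with C by (field; lra); exact HC. }
  apply Rle_trans with (A / (B * C) * B).
  2: replace (A / (B * C) * B) with (A / C) by (field; lra); exact HAC.
  apply Rmult_le_compat_l; [apply Rlt_le, Rdiv_lt_0_compat, Rmult_lt_0_compat|]; lra.
Qed.

Definition tol (p : Z) : R := powerRZ 10 (- p) / (1 + powerRZ 10 (- p)).

Lemma tol_pos_le1 (p : Z) : 0 < tol p <= 1.
Proof.
  pose proof (powerRZ_lt 10 (- p) ltac:(lra)); unfold tol; split.
  - apply Rdiv_lt_0_compat; lra.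
  - apply Rmult_le_reg_r with (1 + powerRZ 10 (- p)); [lra|].
    unfold Rdiv; rewrite Rmult_assoc, Rinv_l; lra.
Qed.

Lemma mmin_exists_le (f : R -> R) (rd : nat -> R -> R) (Lbar : R -> R -> R)
    (x : R) (N : nat) (p : Z) (m0 : nat) :
  (1 <= m0)%nat -> accurate f rd Lbar m0 x N p ->
  exists m, is_mmin f rd Lbar x N p m /\ (m <= m0)%nat.
Proof.
  intros Hm0 Hacc.
  destruct (Wf_nat.dec_inh_nat_subset_has_unique_least_element
              (fun m => (1 <= m)%nat /\ accurate f rd Lbar m x N p))
    as [m [[[Hm Hmacc] Hleast] _]].
  - intros n; apply classic.
  - exists m0; split; assumption.
  - exists m; split; [|apply Hleast; split; assumption].
    repeat split; try assumption.
    intros m' Hm' Hlt Hacc'; specialize (Hleast m' (conj Hm' Hacc')); lia.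
Qed.

Lemma mmin_unique (f : R -> R) (rd : nat -> R -> R) (Lbar : R -> R -> R)
    (x : R) (N : nat) (p : Z) (m1 m2 : nat) :
  is_mmin f rd Lbar x N p m1 -> is_mmin f rd Lbar x N p m2 -> m1 = m2.
Proof.
  intros [H1 [A1 Min1]] [H2 [A2 Min2]].
  destruct (Nat.lt_total m1 m2) as [Hlt|[Heq|Hlt]]; [|exact Heq|].
  - exfalso; exact (Min2 m1 H1 Hlt A1).
  - exfalso; exact (Min1 m2 H2 Hlt A2).
Qed.

Section ErrorAnalysis.

Variables (a b : R) (f : R -> R) (rd : nat -> R -> R) (Lbar : R -> R -> R).
Variables (Lam : R) (n0 : nat) (x : R).

Hypothesis rd_rounding : is_rounding rd.
Hypothesis Lam_ge1 : 1 <= Lam.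
Hypothesis f_lipschitz :
  forall u v, inD a b u -> inD a b v -> Rabs (f u - f v) <= Lam * Rabs (u - v).
Hypothesis Lbar_bounded : forall c e, inD a b c -> 0 <= e -> 0 <= Lbar c e <= Lam.
Hypothesis D_bounded : forall y, inD a b y -> 2 * Rabs y < 2 ^ n0.
Hypothesis f_maps_D : forall y, inD a b y -> inD a b (f y).
Hypothesis x_in_D : inD a b x.
Hypothesis xhat_in_D : forall m n, (1 <= m)%nat -> inD a b (xhat f rd m x n).

Lemma orbit_in_D (n : nat) : inD a b (orbit f x n).
Proof. induction n; simpl; auto. Qed.

Lemma xhat_error_le (m n : nat) : (1 <= m)%nat ->
  Rabs (xhat f rd m x n - orbit f x n) <= 2 ^ n0 / 2 ^ m * (2 * Lam) ^ n.
Proof.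
  intros Hm; revert n.
  apply affine_recursion_bound; [|assumption|intros; apply Rabs_pos| |].
  - apply Rlt_le, Rdiv_lt_0_compat; apply pow2_pos.
  - apply rounding_error_le; auto.
  - intros n; simpl.
    replace (rd m (f (xhat f rd m x n)) - f (orbit f x n))
      with ((rd m (f (xhat f rd m x n)) - f (xhat f rd m x n))
            + (f (xhat f rd m x n) - f (orbit f x n))) by ring.
    eapply Rle_trans; [apply Rabs_triang|apply Rplus_le_compat].
    + apply rounding_error_le; auto.
    + apply f_lipschitz; auto using orbit_in_D.
Qed.

Lemma xhat_rounding_term (m n : nat) : (1 <= m)%nat ->
  0 <= / 2 ^ m * Rabs (xhat f rd m x n) <= 2 ^ n0 / 2 ^ m.
Proof.
  intros Hm; pose proof (D_bounded _ (xhat_in_D m n Hm)); pose proof (pow2_pos m).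
  pose proof (Rabs_pos (xhat f rd m x n)); pose proof (Rinv_0_lt_compat _ (pow2_pos m)).
  unfold Rdiv; rewrite (Rmult_comm (2 ^ n0)); split; [nra|].
  apply Rmult_le_compat_l; lra.
Qed.

Lemma ebar_nonneg (m n : nat) : (1 <= m)%nat -> 0 <= ebar f rd Lbar m x n.
Proof.
  intros Hm; induction n as [|n IH]; simpl.
  - exact (proj1 (xhat_rounding_term m 0 Hm)).
  - pose proof (Lbar_bounded _ _ (xhat_in_D m n Hm) IH).
    pose proof (xhat_rounding_term m (S n) Hm); simpl in *; nra.
Qed.

Lemma ebar_le (m n : nat) : (1 <= m)%nat ->
  ebar f rd Lbar m x n <= 2 ^ n0 / 2 ^ m * (2 * Lam) ^ n.
Proof.
  intros Hm; revert n.
  apply affine_recursion_bound; [|assumption|intros; apply ebar_nonneg, Hm| |].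
  - apply Rlt_le, Rdiv_lt_0_compat; apply pow2_pos.
  - exact (proj2 (xhat_rounding_term m 0 Hm)).
  - intros n; simpl.
    pose proof (Lbar_bounded _ _ (xhat_in_D m n Hm) (ebar_nonneg m n Hm)).
    pose proof (ebar_nonneg m n Hm); pose proof (xhat_rounding_term m (S n) Hm).
    simpl in *; nra.
Qed.

Lemma accurate_at (N : nat) (p : Z) (c k : nat) :
  (forall n, orbit f x n <> 0) -> 2 * Lam <= 2 ^ c ->
  2 * 2 ^ n0 / (tol p * minabs f x N) <= 2 ^ k -> (1 <= c * N + k)%nat ->
  accurate f rd Lbar (c * N + k) x N p.
Proof.
  intros Hnz Hc Hk Hm n Hn; change (powerRZ 10 (- p) / (1 + powerRZ 10 (- p))) with (tol p).
  pose proof (minabs_pos f x Hnz N) as Hmu; pose proof (minabs_le f x N n Hn).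
  destruct (tol_pos_le1 p) as [Htol Htol1].
  set (m := (c * N + k)%nat) in *; set (mu := minabs f x N) in *.
  assert (Hsmall : 2 ^ n0 / 2 ^ m * (2 * Lam) ^ n <= tol p * mu / 2).
  { unfold m; rewrite pow_add; apply scaled_error_le; auto using pow2_pos.
    - apply Rmult_lt_0_compat; lra.
    - split; [apply pow_le; lra|apply pow_le_pow2_mul; auto; lra]. }
  pose proof (xhat_error_le m n Hm); pose proof (ebar_le m n Hm).
  pose proof (Rabs_triang_inv (orbit f x n) (orbit f x n - xhat f rd m x n)) as Htri.
  replace (orbit f x n - (orbit f x n - xhat f rd m x n)) with (xhat f rd m x n) in Htri by ring.
  rewrite Rabs_minus_sym in Htri.
  assert (mu / 2 <= Rabs (xhat f rd m x n)) by nra.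
  nra.
Qed.

(* Precision [c N + k N] suffices up to step [N], where [2^(k N)] compensates the
   smallest orbit value up to [N]; the standing assumption makes [k N = o(N)]. *)
Lemma mmin_linear_bound (p : Z) (c : nat) :
  standing_assumption f x -> 2 * Lam <= 2 ^ c ->
  exists g : nat -> R, Un_cv (fun N => g N / INR N) 0 /\
    forall N, exists m, is_mmin f rd Lbar x N p m /\ INR m <= INR c * INR N + g N.
Proof.
  intros [Hnz Hld] Hc.
  pose proof (minabs_pos f x Hnz) as Hmu; pose proof (tol_pos_le1 p) as [Htol _].
  set (z := 2 * 2 ^ n0 / tol p).
  assert (Hz : 0 < z) by (unfold z; pose proof (pow2_pos n0); apply Rdiv_lt_0_compat; lra).
  set (k := fun N => ld_ceil (z / minabs f x N)).
  exists (fun N => INR (k N)); split.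
  - apply (cv_div_INR_dominated (Rabs (ld z) + 2) _ _ Hld); intros N; split; [apply pos_INR|].
    eapply Rle_trans; [apply ld_ceil_le|]; rewrite ld_div by auto.
    pose proof (Rabs_triang (ld z) (- ld (minabs f x N))).
    rewrite Rabs_Ropp in *; unfold Rminus; lra.
  - intros N.
    assert (Hk : (1 <= c * N + k N)%nat) by (unfold k, ld_ceil; lia).
    destruct (mmin_exists_le f rd Lbar x N p (c * N + k N) Hk) as [m [Hmin Hle]].
    { apply accurate_at; auto.
      replace (2 * 2 ^ n0 / (tol p * minabs f x N)) with (z / minabs f x N)
        by (unfold z; specialize (Hmu N); field; lra).
      apply le_pow2_ld_ceil, Rdiv_lt_0_compat; auto. }
    exists m; split; [exact Hmin|].
    rewrite <- mult_INR, <- plus_INR; apply le_INR, Hle.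
Qed.

End ErrorAnalysis.

Theorem mainTheorem5
  (a b : R) (f f1 f2 : R -> R) (rd : nat -> R -> R)
  (Lbar : R -> R -> R) (Lmax K : R) :
  a < b ->
  (forall y, inD a b y -> inD a b (f y)) ->
  deriv_within (inD a b) f f1 ->
  deriv_within (inD a b) f1 f2 ->
  cont_within (inD a b) f2 ->
  (exists M, forall y, inD a b y -> Rabs (f2 y) <= M) ->
  is_rounding rd ->
  0 <= Lmax -> 0 <= K ->
  Lbar_spec a b f1 Lbar Lmax K ->
  exists C : R, 0 <= C /\
    forall (p : Z) (x : R),
      is_rational x -> inD a b x ->
      standing_assumption f x ->
      (forall m n, (1 <= m)%nat -> inD a b (xhat f rd m x n)) ->
      (exists g : nat -> R,
          Un_cv (fun N => g N / INR N) 0 /\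
          forall N : nat, exists m : nat,
            is_mmin f rd Lbar x N p m /\ INR m <= C * INR N + g N)
      /\ (forall s, is_sigma_p f rd Lbar x p s -> s <= C)
      /\ (forall s, is_sigma f rd Lbar x s -> s <= C).
Proof.
  intros Hab Hf Hd1 Hd2 _ Hf2 Hrd HLmax _ Hspec.
  destruct (uniform_lipschitz_constant a b f f1 f2 Lbar Lmax K (Rlt_le _ _ Hab)
              Hd1 Hd2 Hf2 HLmax Hspec) as [Lam [HLam [Hlip HLbar]]].
  destruct (interval_pow2_bound a b) as [n0 Hn0].
  destruct (pow2_unbounded (2 * Lam)) as [c Hc].
  exists (INR c); split; [apply pos_INR|].
  intros p x _ Hx Hsa Hxhat.
  pose proof (fun q => mmin_linear_bound a b f rd Lbar Lam n0 x Hrd HLam Hlip HLbar Hn0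
                         Hf Hx Hxhat q c Hsa (Rlt_le _ _ Hc)) as Hlinear.
  assert (Hsigma_p : forall q s, is_sigma_p f rd Lbar x q s -> s <= INR c).
  { intros q s [mm [Hmm Hls]]; destruct (Hlinear q) as [g [Hg Hbound]].
    apply (limsup_le_of_sublinear (fun N => INR (mm N)) g _ _ Hg); [|exact Hls].
    intros N; destruct (Hbound N) as [m [Hm Hle]].
    rewrite (mmin_unique _ _ _ _ _ _ _ _ (Hmm N) Hm); exact Hle. }
  split; [exact (Hlinear p)|split; [apply Hsigma_p|]].
  intros s [sig [Hsig Hcv]]; apply (le_of_cv_Z sig); [|exact Hcv].
  intros q; exact (Hsigma_p q _ (Hsig q)).
Qed.
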